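(* The class of betweenness frames is not sufficiency axiomatic; that is, there is no set $\Gamma$ of formulas in the language with a binary sufficiency operator $[\![\cdot,\cdot]\!]$ such that a 3-frame belongs to the class of betweenness frames if and only if every formula of $\Gamma$ is valid on it.
   Context: A 3-frame is a pair $\langle U,B\rangle$ with $U$ a non-empty set and $B\subseteq U^3$. It is a betweenness frame if for all $a,b,c\in U$: (BT0) $B(a,a,a)$; (BT1) $B(a,b,c)\Rightarrow B(c,b,a)$; (BT2) $B(a,b,c)\Rightarrow B(a,a,b)$; (BT3) $B(a,b,c)\wedge B(a,c,b)\Rightarrow b=c$. Formulas of the sufficiency language are built from propositional variables with Boolean connectives and a binary operator $[\![\varphi,\psi]\!]$. In a model on a 3-frame $\langle U,B\rangle$ (a valuation of variables as subsets of $U$, Boolean connectives interpreted classically), $x\Vdash[\![\varphi,\psi]\!]$ iff for all $y,z\in U$, if $y\Vdash\varphi$ and $z\Vdash\psi$ then $B(y,x,z)$. A formula is valid on a frame if it holds at every point under every valuation. A class of 3-frames is sufficiency axiomatic if it is the class of all 3-frames on which all formulas of some set $\Gamma$ are valid. *)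

Inductive formula : Type :=
  | FVar  : nat -> formula
  | FBot  : formula
  | FTop  : formula
  | FNeg  : formula -> formula
  | FAnd  : formula -> formula -> formula
  | FOr   : formula -> formula -> formula
  | FImp  : formula -> formula -> formula
  | FSuff : formula -> formula -> formula.

Fixpoint forces (U : Type) (B : U -> U -> U -> Prop) (v : nat -> U -> Prop)
    (x : U) (f : formula) : Prop :=
  match f with
  | FVar n => v n x
  | FBot => False
  | FTop => True
  | FNeg g => ~ forces U B v x g
  | FAnd g h => forces U B v x g /\ forces U B v x h
  | FOr g h => forces U B v x g \/ forces U B v x h
  | FImp g h => forces U B v x g -> forces U B v x h
  | FSuff g h => forall y z : U,
      forces U B v y g -> forces U B v z h -> B y x z
  end.

Definition valid_on (U : Type) (B : U -> U -> U -> Prop) (f : formula) : Prop :=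
  forall (v : nat -> U -> Prop) (x : U), forces U B v x f.

(** Betweenness frames: axioms BT0--BT3. *)
Definition betweenness_frame (U : Type) (B : U -> U -> U -> Prop) : Prop :=
  (forall a, B a a a) /\
  (forall a b c, B a b c -> B c b a) /\
  (forall a b c, B a b c -> B a a b) /\
  (forall a b c, B a b c -> B a c b -> b = c).

Definition sufficiency_axiomatic
    (K : forall U : Type, (U -> U -> U -> Prop) -> Prop) : Prop :=
  exists Gamma : formula -> Prop,
    forall (U : Type) (B : U -> U -> U -> Prop), inhabited U ->
      (K U B <-> forall f, Gamma f -> valid_on U B f).

(* On the total ternary relation every [[phi, psi]] holds everywhere, so the
   truth of a formula at a point depends only on which variables hold at that
   point.  Hence a formula valid on the one-point total frame is valid on the
   total frame over any set.  The one-point total frame is a betweenness frame,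
   whereas the two-point one violates BT3, so no set of formulas can define the
   class. *)

From Stdlib Require Import Setoid.

Definition total_rel (U : Type) : U -> U -> U -> Prop := fun _ _ _ => True.

Lemma forces_total_rel_pointwise (U : Type) (f : formula) :
  forall (v : nat -> U -> Prop) (x : U),
    forces U (total_rel U) v x f <->
    forces unit (total_rel unit) (fun n _ => v n x) tt f.
Proof.
  induction f as [n | | | g IHg | g IHg h IHh | g IHg h IHh | g IHg h IHh | g _ h _];
    intros v x; simpl.
  - reflexivity.
  - reflexivity.
  - reflexivity.
  - now rewrite IHg.
  - now rewrite IHg, IHh.
  - now rewrite IHg, IHh.
  - now rewrite IHg, IHh.
  - unfold total_rel; split; auto.
Qed.

Lemma valid_on_total_rel_unit (U : Type) (f : formula) :
  valid_on unit (total_rel unit) f -> valid_on U (total_rel U) f.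
Proof.
  intros Hf v x.
  apply forces_total_rel_pointwise, Hf.
Qed.

Lemma betweenness_frame_total_rel_unit : betweenness_frame unit (total_rel unit).
Proof.
  unfold betweenness_frame, total_rel.
  repeat split; auto.
  intros _ [] [] _ _; reflexivity.
Qed.

Lemma not_betweenness_frame_total_rel (U : Type) (a b : U) :
  a <> b -> ~ betweenness_frame U (total_rel U).
Proof.
  intros Hab (_ & _ & _ & BT3).
  apply Hab, (BT3 a a b); exact I.
Qed.

Theorem theorem19 : ~ sufficiency_axiomatic betweenness_frame.
Proof.
  intros [Gamma Hdef].
  assert (Hunit : forall f, Gamma f -> valid_on unit (total_rel unit) f).
  { apply (Hdef unit (total_rel unit) (inhabits tt)).
    exact betweenness_frame_total_rel_unit. }
  apply (not_betweenness_frame_total_rel bool true false); [discriminate |].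
  apply (Hdef bool (total_rel bool) (inhabits true)).
  intros f Hf.
  now apply valid_on_total_rel_unit, Hunit.
Qed.
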